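(* Let $\Delta \geq 0$ and let $H$ be an $n$-vertex graph with maximum degree at most $\Delta$. Then there is a collection of $t \leq 300 \sqrt{\Delta n}$ matchings $M_1, \dotsc, M_t \subseteq H$ such that (M1) each edge of $H$ belongs to exactly two of the matchings $M_1,\dots,M_t$; and (M2) for each $1 \leq i < j \leq t$, the matchings $M_i$ and $M_j$ have at most one edge in common. *)

From mathcomp Require Import all_boot all_order all_algebra.
Set Implicit Arguments. Unset Strict Implicit. Unset Printing Implicit Defensive.
Import Order.TTheory GRing.Theory Num.Theory.

Definition simple_graph (n : nat) (e : rel 'I_n) : Prop :=
  (forall u v, e u v = e v u) /\ (forall v, ~~ e v v).

Definition edges (n : nat) (e : rel 'I_n) : {set {set 'I_n}} :=
  [set f : {set 'I_n} | [exists u, exists v, e u v && (f == [set u; v])]].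

Definition degree (n : nat) (e : rel 'I_n) (v : 'I_n) : nat :=
  #|[set u | e v u]|.

Definition is_matching (n : nat) (e : rel 'I_n) (M : {set {set 'I_n}}) : Prop :=
  M \subset edges e /\
  (forall f g, f \in M -> g \in M -> f != g -> [disjoint f & g]).

From mathcomp Require Import all_boot all_order all_algebra.
From mathcomp Require Import zify.
Set Implicit Arguments.
Unset Strict Implicit.
Unset Printing Implicit Defensive.
Import Order.TTheory GRing.Theory Num.Theory.

(* Give every edge a distinct cell of a k x k grid so that edges sharing a
   vertex lie in distinct rows and in distinct columns.  When the maximum degree
   is d, an edge meets at most 2d edges (itself included), so such a colouring
   is built greedily as soon as the grid stripped of 2d rows and 2d columns
   still has |E| cells, e.g. for k = 2d + s with s^2 >= |E|.  The k rows and
   the k columns are then 2k matchings: every edge lies in its row and its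
   column, two rows or two columns share no edge, and a row meets a column in
   at most the edge of their common cell.  Finally |E| <= nd and s can be
   chosen with s^2 <= 4|E|, so (2k)^2 <= 72 dn. *)

Lemma free_grid_cell k D (A B : {set 'I_k}) (U : {set 'I_k * 'I_k}) :
  #|A| <= D -> #|B| <= D -> #|U| < (k - D) * (k - D) ->
  exists2 c : 'I_k * 'I_k, (c.1 \notin A) && (c.2 \notin B) & c \notin U.
Proof.
move=> leAD leBD ltUD.
have cardC (C : {set 'I_k}) : #|~: C| = k - #|C| by have := cardsC C; rewrite card_ord; lia.
have card_free : (k - D) * (k - D) <= #|setX (~: A) (~: B)|.
  by rewrite cardsX !cardC leq_mul ?leq_sub2l.
have : ~~ (setX (~: A) (~: B) \subset U).
  by apply: contraL ltUD => /subset_leq_card leXU; rewrite -leqNgt (leq_trans card_free).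
by case/subsetPn=> c; rewrite !inE => cAB cU; exists c.
Qed.

Section GridColoring.

Variables (T : finType) (adj : rel T).
Hypothesis adjC : symmetric adj.

Definition grid_coloring k (E : {set T}) (phi : T -> nat * nat) :=
  [/\ {in E, forall f, ((phi f).1 < k) && ((phi f).2 < k)},
      {in E &, injective phi} &
      {in E &, forall f g, f != g -> adj f g ->
         ((phi f).1 != (phi g).1) && ((phi f).2 != (phi g).2)}].

Lemma card_adj_setD1 (E : {set T}) x f :
  #|[set g in E :\ x | adj f g]| <= #|[set g in E | adj f g]|.
Proof.
by apply/subset_leq_card/subsetP=> g; rewrite !inE => /andP[/andP[_ ->] ->].
Qed.

Lemma grid_coloring_free_cell k D (E : {set T}) x (phi : T -> nat * nat) :
  x \in E -> #|[set g in E | adj x g]| <= D -> #|E| <= (k - D) * (k - D) ->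
  exists c : nat * nat,
    [/\ (c.1 < k) && (c.2 < k), {in E :\ x, forall g, phi g != c} &
        {in E :\ x, forall g, adj x g -> (c.1 != (phi g).1) && (c.2 != (phi g).2)}].
Proof.
case: k => [|k] xE degx leEk.
  by rewrite sub0n muln0 leqn0 cards_eq0 in leEk; rewrite (eqP leEk) inE in xE.
pose N := [set g in E :\ x | adj x g].
pose A : {set 'I_k.+1} := [set inord (phi g).1 | g in N].
pose B : {set 'I_k.+1} := [set inord (phi g).2 | g in N].
pose U : {set 'I_k.+1 * 'I_k.+1} :=
  [set (inord (phi g).1, inord (phi g).2) | g in E :\ x].
have leND : #|N| <= D := leq_trans (card_adj_setD1 E x x) degx.
have ltUD : #|U| < (k.+1 - D) * (k.+1 - D).
  exact: leq_ltn_trans (leq_imset_card _ _) (leq_trans (proper_card (properD1 xE)) leEk).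
have leAD : #|A| <= D := leq_trans (leq_imset_card _ _) leND.
have leBD : #|B| <= D := leq_trans (leq_imset_card _ _) leND.
have [c /andP[cA cB] cU] := free_grid_cell leAD leBD ltUD.
exists (val c.1, val c.2); split; first by rewrite !ltn_ord.
  move=> g gE'; apply: contraNneq cU => phig.
  by apply/imsetP; exists g; rewrite // phig /= !inord_val -surjective_pairing.
move=> g gE' axg; have gN : g \in N by rewrite inE gE'.
apply/andP; split.
  by apply: contraNneq cA => c1g; apply/imsetP; exists g; rewrite // -c1g inord_val.
by apply: contraNneq cB => c2g; apply/imsetP; exists g; rewrite // -c2g inord_val.
Qed.

Lemma grid_coloring_setD1 k (E : {set T}) x phi (c : nat * nat) :
  grid_coloring k (E :\ x) phi -> (c.1 < k) && (c.2 < k) ->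
  {in E :\ x, forall g, phi g != c} ->
  {in E :\ x, forall g, adj x g -> (c.1 != (phi g).1) && (c.2 != (phi g).2)} ->
  grid_coloring k E (fun y => if y == x then c else phi y).
Proof.
move=> [bd inj sep] ck new free.
have memD1 y : y \in E -> y != x -> y \in E :\ x by move=> yE yx; apply/setD1P.
split.
- by move=> f fE; case: eqVneq => [//|fx]; apply/bd/memD1.
- move=> f g fE gE /=.
  case: (eqVneq f x) => [->|fx]; case: (eqVneq g x) => [->|gx] //.
  + by move=> cg; have := new g (memD1 _ gE gx); rewrite cg eqxx.
  + by move=> fc; have := new f (memD1 _ fE fx); rewrite fc eqxx.
  + by apply: inj; apply: memD1.
- move=> f g fE gE /=.
  case: (eqVneq f x) => [->|fx]; case: (eqVneq g x) => [->|gx] //.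
  + by move=> _; apply: free; apply: memD1.
  + by move=> _; rewrite adjC eq_sym [(_.2 == _)]eq_sym; apply: free; apply: memD1.
  + by apply: sep; apply: memD1.
Qed.

Lemma greedy_grid_coloring k D (E : {set T}) :
  {in E, forall f, #|[set g in E | adj f g]| <= D} ->
  #|E| <= (k - D) * (k - D) -> exists phi, grid_coloring k E phi.
Proof.
have [m] := ubnP #|E|; elim: m E => // m IH E ltEm degE leEk.
have [->|[x xE]] := set_0Vmem E; first by exists (fun=> (0, 0)); split=> f; rewrite inE.
have ltE'E := proper_card (properD1 xE).
have degE' : {in E :\ x, forall f, #|[set g in E :\ x | adj f g]| <= D}.
  by move=> f /setD1P[_ fE]; apply: leq_trans (card_adj_setD1 E x f) (degE f fE).
have [phi col] := IH _ (leq_trans ltE'E ltEm) degE' (leq_trans (ltnW ltE'E) leEk).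
have [c [ck new free]] := grid_coloring_free_cell phi xE (degE x xE) leEk.
by exists (fun y => if y == x then c else phi y); apply: grid_coloring_setD1.
Qed.

End GridColoring.

Lemma card_bigcup_le (I T : finType) (P : pred I) (F : I -> {set T}) :
  #|\bigcup_(i | P i) F i| <= \sum_(i | P i) #|F i|.
Proof.
elim/big_rec2: _ => [|i A m _ leAm]; first by rewrite cards0.
exact: leq_trans (leq_card_setU _ _) (leq_add _ leAm).
Qed.

Section Graph.

Variables (n : nat) (e : rel 'I_n).
Hypothesis eC : symmetric e.

Definition star (z : 'I_n) : {set {set 'I_n}} := [set [set z; w] | w in [set w | e z w]].

Lemma card_star z : #|star z| <= degree e z.
Proof. exact: leq_imset_card. Qed.

Lemma edgesP f : reflect (exists u v, e u v /\ f = [set u; v]) (f \in edges e).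
Proof.
rewrite inE; apply: (iffP existsP) => [[u /existsP[v /andP[euv /eqP ->]]]|[u [v [euv ->]]]].
  by exists u, v.
by exists u; apply/existsP; exists v; rewrite euv eqxx.
Qed.

Lemma star_edge z f : f \in edges e -> z \in f -> f \in star z.
Proof.
case/edgesP=> u [v [euv ->]]; rewrite !inE => /orP[]/eqP->.
  by apply/imsetP; exists v; rewrite ?inE.
by apply/imsetP; exists u; rewrite ?inE 1?eC // setUC.
Qed.

Variable d : nat.
Hypothesis deg_le : forall v, degree e v <= d.

Lemma card_edges_meeting f : f \in edges e ->
  #|[set g in edges e | ~~ [disjoint f & g]]| <= d + d.
Proof.
case/edgesP=> u [v [_ ->]].
apply: (@leq_trans #|star u :|: star v|).
  apply/subset_leq_card/subsetP=> g; rewrite inE -setI_eq0 => /andP[gE /set0Pn[z]].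
  by rewrite !inE => /andP[/orP[]/eqP-> zg]; apply/orP; [left|right]; apply: star_edge.
apply: leq_trans (leq_card_setU _ _) _.
by rewrite leq_add // (leq_trans (card_star _)).
Qed.

Lemma card_edges : #|edges e| <= n * d.
Proof.
have sub : edges e \subset \bigcup_(z : 'I_n) star z.
  apply/subsetP=> f fE; case/edgesP: (fE) => u [v [_ fuv]].
  by apply/bigcupP; exists u; rewrite // star_edge // fuv !inE eqxx.
apply: leq_trans (subset_leq_card sub) (leq_trans (card_bigcup_le _ _) _).
rewrite -[n in n * d]card_ord -sum_nat_const.
by apply: leq_sum => z _; apply: leq_trans (card_star z) (deg_le z).
Qed.

End Graph.

Lemma card_ord_pair t a b : a < t -> b < t -> a != b ->
  #|[set i : 'I_t | (val i == a) || (val i == b)]| = 2.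
Proof.
move=> lt_at lt_bt neq_ab.
have -> : [set i : 'I_t | (val i == a) || (val i == b)] = [set Ordinal lt_at; Ordinal lt_bt].
  by apply/setP=> i; rewrite !inE -!val_eqE.
by rewrite cards2 -val_eqE /= neq_ab.
Qed.

Section GridMatchings.

Variables (n : nat) (e : rel 'I_n) (k : nat) (phi : {set 'I_n} -> nat * nat).
Hypothesis col : grid_coloring (fun f g : {set 'I_n} => ~~ [disjoint f & g]) k (edges e) phi.

Definition grid_matching (i : nat) : {set {set 'I_n}} :=
  [set f in edges e | (i == (phi f).1) || (i == k + (phi f).2)].

Lemma grid_matching_is_matching i : is_matching e (grid_matching i).
Proof.
have [bd _ sep] := col.
split; first by apply/subsetP=> f /setIdP[].
move=> f g /setIdP[fE fi] /setIdP[gE gi] fg.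
apply: contraT => meet; have := sep f g fE gE fg meet.
by move: fi gi (bd f fE) (bd g gE); lia.
Qed.

Lemma card_grid_matchings_at f : f \in edges e ->
  #|[set i : 'I_(k + k) | f \in grid_matching i]| = 2.
Proof.
have [bd _ _] := col; move=> fE; have /andP[lt1 lt2] := bd f fE.
have row_lt : (phi f).1 < k + k := ltn_addr k lt1.
have col_lt : k + (phi f).2 < k + k by rewrite ltn_add2l.
rewrite -(card_ord_pair row_lt col_lt); last by lia.
by apply: eq_card => i; rewrite [LHS]inE [RHS]inE /grid_matching in_set fE.
Qed.

Lemma card_grid_matchingI i j : i != j -> #|grid_matching i :&: grid_matching j| <= 1.
Proof.
have [bd inj _] := col; move=> ij.
apply/card_le1_eqP=> f g /setIP[/setIdP[fE fi] /setIdP[_ fj]].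
move=> /setIP[/setIdP[gE gi] /setIdP[_ gj]].
apply: inj => //; apply/eqP; move: fi fj gi gj (bd f fE) (bd g gE) ij.
by case: (phi f) (phi g) => [a b] [c d] /=; rewrite xpair_eqE; lia.
Qed.

End GridMatchings.

Lemma exists_sqr_between m : exists s, m <= s * s <= 4 * m.
Proof.
have ex_s : exists s, m <= s * s by exists m; nia.
case: (ex_minnP ex_s) => -[|s] le_ms min_s; first by exists 0; rewrite le_ms.
have lt_sm : s * s < m by rewrite ltnNge; apply: contraTN (ltnSn s) => /min_s; rewrite -leqNgt.
by exists s.+1; rewrite le_ms /=; nia.
Qed.

Lemma natr_le_mul_sqrt (R : rcfType) (t c : nat) (x : R) : (0 <= x)%R ->
  ((t * t)%:R <= (c * c)%:R * x)%R -> (t%:R <= c%:R * Num.sqrt x)%R.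
Proof.
move=> x_ge0 le_tcx; rewrite -ler_sqr ?nnegrE ?mulr_ge0 ?sqrtr_ge0 //.
by rewrite exprMn sqr_sqrtr // !expr2 -!natrM.
Qed.

Local Open Scope ring_scope.

Theorem lemma6p1 (R : rcfType) (Delta : R) (n : nat) (e : rel 'I_n) :
  0 <= Delta ->
  simple_graph e ->
  (forall v : 'I_n, (degree e v)%:R <= Delta) ->
  exists (t : nat) (M : 'I_t -> {set {set 'I_n}}),
    [/\ t%:R <= 300 * Num.sqrt (Delta * n%:R),
        (forall i, is_matching e (M i)),
        (forall f, f \in edges e -> #|[set i | f \in M i]| = 2%N) &
        (forall i j : 'I_t, (i < j)%N -> (#|M i :&: M j| <= 1)%N)].
Proof.
move=> Delta_ge0 [eC _] deg_le_Delta.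
pose d := (\max_(v : 'I_n) degree e v)%N.
have deg_le v : (degree e v <= d)%N := leq_bigmax v.
have d_le_n : (d <= n)%N.
  by apply/bigmax_leqP=> v _; rewrite -[n in (_ <= n)%N]card_ord max_card.
have d_le_Delta : d%:R <= Delta.
  by apply: (big_ind (fun x : nat => x%:R <= Delta)) => // x y; rewrite /maxn; case: ifP.
have [s /andP[le_Es le_s]] := exists_sqr_between #|edges e|.
pose k := (d + d + s)%N.
have meetC : symmetric (fun f g : {set 'I_n} => ~~ [disjoint f & g]).
  by move=> f g; rewrite disjoint_sym.
have le_E_grid : (#|edges e| <= (k - (d + d)) * (k - (d + d)))%N by rewrite addKn.
have [phi col] := greedy_grid_coloring meetC (card_edges_meeting eC deg_le) le_E_grid.
have grid_size : ((k + k) * (k + k) <= 300 * 300 * (d * n))%N.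
  by have := card_edges eC deg_le; nia.
exists (k + k)%N, (fun i => grid_matching e k phi i); split.
- apply: natr_le_mul_sqrt; first by rewrite mulr_ge0.
  apply: le_trans (_ : ((300 * 300 * (d * n))%N)%:R <= _); first by rewrite ler_nat.
  by rewrite natrM ler_wpM2l // natrM ler_wpM2r.
- exact: grid_matching_is_matching col.
- exact: card_grid_matchings_at col.
- by move=> i j ij; apply: (card_grid_matchingI col); rewrite neq_ltn ij.
Qed.
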